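(* Let $\mathcal{P}$ be a unital partition of the cyclic group $G=\mu_m$ and let $d,d'$ be divisors of $m$. Then $\mathcal{P}_d\cap\mathcal{P}_{d'}\neq\emptyset$ if and only if $\mathcal{P}_d=\mathcal{P}_{d'}$.
   Context: A unital partition of a finite commutative group $G$ is a partition $G=\{1\}\sqcup A_0\sqcup\dots\sqcup A_s$ such that, with $a_i=\sum_{x\in A_i}x\in\mathbb{Z}[G]$, the $\mathbb{Z}$-span of $1$ and the $a_i$ is closed under multiplication in $\mathbb{Z}[G]$. For $d\mid m$, $\mathcal{P}_d$ is the set of members of $\mathcal{P}$ containing an element of order exactly $d$. *)

From HB Require Import structures.
From mathcomp Require Import all_boot all_order all_algebra all_fingroup all_solvable.
Set Implicit Arguments. Unset Strict Implicit. Unset Printing Implicit Defensive.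
Import GRing.Theory.
Local Open Scope ring_scope.

(* The integral group ring Z[G] of a finite group G (subgroup of gT) is
   modelled by integer-valued functions on gT (supported on G); the product is
   convolution over G. *)
Definition grconv (gT : finGroupType) (G : {set gT}) (f g : gT -> int) : gT -> int :=
  fun z => \sum_(x in G) f x * g ((x^-1 * z)%g).

(* The element sum_{x in A} x of Z[G]. *)
Definition grind (gT : finGroupType) (A : {set gT}) : gT -> int :=
  fun z => (z \in A)%:Z.

Definition in_zspan (gT : finGroupType) (P : {set {set gT}}) (f : gT -> int) : Prop :=
  exists c : {set gT} -> int, forall z, f z = \sum_(A in P) c A * grind A z.

Definition unital_partition (gT : finGroupType) (G : {set gT}) (P : {set {set gT}}) : Prop :=
  [/\ partition P G, [set 1%g] \in P &
      forall f g, in_zspan P f -> in_zspan P g -> in_zspan P (grconv G f g)].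

Definition Pd (gT : finGroupType) (P : {set {set gT}}) (d : nat) : {set {set gT}} :=
  [set A in P | [exists x in A, #[x]%g == d]].

(* The heart of the argument is a Galois invariance: for k coprime to |G| the
   power map x |-> x^k sends every union of blocks of P to a union of blocks.
   For a prime p not dividing |G| this is a Frobenius argument: the p-th
   convolution power of a block sum a_S lies in the Z-span of P (so it is
   constant on blocks), and modulo p it is the indicator of S^p, because in
   characteristic p the p-th power of a sum of commuting elements is the sum of
   their p-th powers. We compute in F_p[G] through the regular representation
   by square matrices indexed by the elements of gT, so that the ring laws come
   for free. Composing prime powers then handles every k coprime to |G|.

   For the corollary, let a block A contain x of order d and y of order d', and
   let a block B contain z of order d. Then x = z^i with i a unit mod d, and i
   lifts to a k coprime to m; B^k is a union of blocks containing x, hence it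
   contains y = w^k with w in B, and w also has order d'. Thus P_d is contained
   in P_d', and symmetrically. Conversely P_d' is never empty, since a cyclic
   group of order m has an element of every order dividing m. *)

From mathcomp Require Import all_boot all_order all_algebra all_fingroup all_solvable.
Set Implicit Arguments. Unset Strict Implicit. Unset Printing Implicit Defensive.

(* A unit modulo a divisor d of m lifts to a unit modulo m: take j + d t, where
   t is the product of the primes of m not dividing j. *)
Lemma coprime_lift j d m : 0 < m -> d %| m -> coprime j d ->
  exists k, [/\ 0 < k, coprime k m & k = j %[mod d]].
Proof.
move=> m_gt0 dm co_jd; have d_gt0 : 0 < d := dvdn_gt0 m_gt0 dm.
have prime_m q : q \in primes m -> prime q by rewrite mem_primes => /andP[].
pose t := \prod_(q <- primes m | ~~ (q %| j)) q.
have t_gt0 : 0 < t.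
  by rewrite /t big_seq_cond prodn_cond_gt0 // => q /andP[/prime_m/prime_gt0].
have t_dvd q : q \in primes m -> (q %| t) = ~~ (q %| j).
  move=> qm; rewrite /t Euclid_dvd_prod ?prime_m // big_has_cond.
  apply/hasP/idP => [[r rm /andP[rj qr]]|qj].
    by have /eqP-> : q == r by rewrite -dvdn_prime2 ?prime_m.
  by exists q => //=; rewrite qj dvdnn.
exists (j + d * t); split; first by rewrite addn_gt0 muln_gt0 d_gt0 t_gt0 orbT.
  rewrite coprime_has_primes ?addn_gt0 ?muln_gt0 ?d_gt0 ?t_gt0 ?orbT //.
  apply/hasPn => q qm; rewrite mem_primes !negb_and; apply/orP; right; apply/orP; right.
  have [qj|qj] := boolP (q %| j).
    rewrite dvdn_addr // Euclid_dvdM ?prime_m // t_dvd // qj orbF -prime_coprime ?prime_m //.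
    exact: coprime_dvdl qj co_jd.
  by rewrite dvdn_addl ?qj // dvdn_mull // t_dvd.
by rewrite addnC mulnC modnMDl.
Qed.

Import GRing.Theory.
Local Open Scope ring_scope.

Definition block_union (gT : finGroupType) (P : {set {set gT}}) (S : {set gT}) :=
  forall A, A \in P -> forall u v, u \in A -> v \in A -> u \in S -> v \in S.

Section BlockSums.

Variables (gT : finGroupType) (G : {set gT}) (P : {set {set gT}}).
Hypothesis partP : partition P G.

Lemma block_subset A : A \in P -> A \subset G.
Proof. by move=> AP; rewrite -(cover_partition partP); apply: bigcup_sup. Qed.

Lemma zspan_coef (c : {set gT} -> int) z B : B \in P -> z \in B ->
  \sum_(A in P) c A * grind A z = c B.
Proof.
move=> BP zB; rewrite (bigD1 B) //= /grind zB mulr1 big1 ?addr0 // => A.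
case/andP=> AP neAB; have [zA|] := boolP (z \in A); last by rewrite mulr0.
have trivP := partition_trivIset partP.
by case/eqP: neAB; rewrite -(def_pblock trivP AP zA) (def_pblock trivP BP zB).
Qed.

Lemma zspan_coef_out (c : {set gT} -> int) z : z \notin G ->
  \sum_(A in P) c A * grind A z = 0.
Proof.
move=> zG; apply: big1 => A AP; rewrite /grind.
have [zA|] := boolP (z \in A); last by rewrite mulr0.
by case/negP: zG; apply: (subsetP (block_subset AP)).
Qed.

Lemma zspan_const (f : gT -> int) A u v :
  in_zspan P f -> A \in P -> u \in A -> v \in A -> f u = f v.
Proof.
by case=> c fE AP uA vA; rewrite !fE (zspan_coef c AP uA) (zspan_coef c AP vA).
Qed.

Lemma block_union_zspan (S : {set gT}) :
  S \subset G -> block_union P S -> in_zspan P (grind S).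
Proof.
move=> SG unionS; exists (fun A : {set gT} => (A \subset S)%:Z) => z.
have [zG|zG] := boolP (z \in G); last first.
  rewrite zspan_coef_out // /grind; have [zS|//] := boolP (z \in S).
  by case/negP: zG; apply: (subsetP SG).
have zP : z \in cover P by rewrite (cover_partition partP).
rewrite (zspan_coef _ (pblock_mem zP) (eqbRL (mem_pblock P z) zP)) /grind.
congr (Posz (nat_of_bool _)); apply/idP/subsetP => [zS v vB | sub]; last first.
  by apply: sub; rewrite mem_pblock.
by apply: (unionS _ (pblock_mem zP) z v) => //; rewrite mem_pblock.
Qed.

Lemma block_union_block B : B \in P -> block_union P B.
Proof.
have trivP := partition_trivIset partP.
move=> BP A AP u v uA vA uB.
by rewrite -(def_pblock trivP BP uB) (def_pblock trivP AP uA).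
Qed.

End BlockSums.

Section RegularRepresentation.

Variables (gT : finGroupType) (n : nat) (cardT : #|gT| = n.+1) (R : nzRingType).

Definition elt_index (x : gT) : 'I_n.+1 := cast_ord cardT (enum_rank x).
Definition index_elt (i : 'I_n.+1) : gT := enum_val (cast_ord (esym cardT) i).

Lemma elt_indexK : cancel elt_index index_elt.
Proof. by move=> x; rewrite /index_elt /elt_index cast_ordK enum_rankK. Qed.

Lemma index_eltK : cancel index_elt elt_index.
Proof. by move=> i; rewrite /index_elt /elt_index enum_valK cast_ordKV. Qed.

Lemma sum_index_elt (F : gT -> R) : \sum_(i < n.+1) F (index_elt i) = \sum_x F x.
Proof.
rewrite (reindex elt_index) /=; last first.
  by apply: onW_bij; exists index_elt; [apply: elt_indexK | apply: index_eltK].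
by apply: eq_bigr => x _; rewrite elt_indexK.
Qed.

Definition regmx (f : gT -> int) : 'M[R]_n.+1 :=
  \matrix_(i, j) (f ((index_elt i)^-1 * index_elt j)%g)%:~R.

Lemma regmx_entry1 f z : regmx f (elt_index 1%g) (elt_index z) = (f z)%:~R.
Proof. by rewrite mxE !elt_indexK invg1 mul1g. Qed.

Lemma eq_regmx f g : f =1 g -> regmx f = regmx g.
Proof. by move=> fg; apply/matrixP => i j; rewrite !mxE fg. Qed.

Lemma regmx_conv (H : {set gT}) f g : (forall x, x \notin H -> f x = 0) ->
  regmx (grconv H f g) = regmx f *m regmx g.
Proof.
move=> f0; apply/matrixP => i j; rewrite !mxE /grconv rmorph_sum.
under [RHS]eq_bigr => k _ do rewrite !mxE.
rewrite (sum_index_elt (fun w =>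
  (f ((index_elt i)^-1 * w)%g)%:~R * (g (w^-1 * index_elt j)%g)%:~R)).
rewrite [RHS](reindex_inj (mulgI (index_elt i))) /=.
rewrite [RHS](bigID (mem H)) /= [X in _ + X]big1 ?addr0; last first.
  by move=> x xH; rewrite mulKg f0 ?mul0r.
by apply: eq_bigr => x _; rewrite intrM mulKg invMg mulgA.
Qed.

Lemma regmx1 : regmx (grind [set 1%g]) = 1.
Proof.
apply/matrixP => i j; rewrite !mxE /grind in_set1 -eq_mulVg1.
by rewrite (inj_eq (can_inj index_eltK)); case: (i == j).
Qed.

Definition regmx_elt (x : gT) := regmx (grind [set x]).

Lemma regmx_eltM x y : regmx_elt x * regmx_elt y = regmx_elt (x * y)%g.
Proof.
rewrite -mulmxE /regmx_elt -(@regmx_conv [set: gT]) => [|z]; last by rewrite inE.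
apply: eq_regmx => z; rewrite /grconv (bigD1 x) ?inE //= big1 ?addr0.
  by rewrite /grind !in_set1 eqxx mul1r (canF_eq (mulKVg x)).
by move=> w /andP[_ wx]; rewrite /grind in_set1 (negPf wx) mul0r.
Qed.

Lemma regmx_eltX x k : regmx_elt x ^+ k = regmx_elt (x ^+ k)%g.
Proof.
elim: k => [|k IHk]; first by rewrite expr0 expg0 /regmx_elt regmx1.
by rewrite exprS IHk regmx_eltM expgS.
Qed.

Lemma regmx_grind (S : {set gT}) : regmx (grind S) = \sum_(x in S) regmx_elt x.
Proof.
apply/matrixP => i j; rewrite summxE mxE.
under eq_bigr => x _ do rewrite mxE /grind in_set1.
set u := ((index_elt i)^-1 * index_elt j)%g; rewrite /grind.
have [uS|uS] := boolP (u \in S).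
  rewrite (bigD1 u) //= eqxx big1 ?addr0 // => x /andP[_ xu].
  by rewrite eq_sym (negPf xu).
by rewrite big1 // => x xS; case: eqP => // ux; rewrite ux xS in uS.
Qed.

End RegularRepresentation.

Lemma regmx_frobenius (gT : finGroupType) n (cardT : #|gT| = n.+1) p (s : seq gT) :
  prime p -> {in s &, forall x y, commute x y} ->
  (\sum_(x <- s) regmx_elt cardT 'F_p x) ^+ p
    = \sum_(x <- s) regmx_elt cardT 'F_p (x ^+ p)%g.
Proof.
move=> p_pr; have pcharM : p \in [pchar 'M['F_p]_n.+1].
  by rewrite pchar_lalg pchar_Fp.
elim: s => [|a s IHs] comm_s; first by rewrite !big_nil expr0n eqn0Ngt prime_gt0.
rewrite !big_cons -(pFrobenius_autE pcharM) pFrobenius_autD_comm; last first.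
  rewrite big_seq; apply: commr_sum => y ys.
  by rewrite /GRing.comm !regmx_eltM comm_s ?inE ?eqxx ?ys ?orbT.
rewrite !pFrobenius_autE regmx_eltX IHs // => x y xs ys.
by apply: comm_s; rewrite inE ?xs ?ys orbT.
Qed.

Fixpoint conv_pow (gT : finGroupType) (G S : {set gT}) (k : nat) : gT -> int :=
  if k is k'.+1 then grconv G (grind S) (conv_pow G S k') else grind [set 1%g].

Definition expset (gT : finGroupType) (k : nat) (S : {set gT}) : {set gT} :=
  [set (x ^+ k)%g | x in S].

Lemma regmx_conv_pow (gT : finGroupType) n (cardT : #|gT| = n.+1) (R : nzRingType)
    (G S : {set gT}) k :
  S \subset G -> regmx cardT R (conv_pow G S k) = regmx cardT R (grind S) ^+ k.
Proof.
move=> SG; elim: k => [|k IHk] /=; first by rewrite regmx1 expr0.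
rewrite regmx_conv ?exprS ?IHk -?mulmxE // => x xG; rewrite /grind.
by have [/(subsetP SG)|//] := boolP (x \in S); rewrite (negPf xG).
Qed.

Lemma conv_pow_prime_modp (gT : finGroupType) (G : {group gT}) (S : {set gT}) p z :
  prime p -> abelian G -> coprime #|G| p -> S \subset G ->
  ((conv_pow G S p z)%:~R : 'F_p) = (z \in expset p S)%:R.
Proof.
move=> p_pr abG coGp SG.
have [n cardT] : exists n, #|gT| = n.+1.
  by exists #|gT|.-1; rewrite prednK // -cardsT (cardG_gt0 [set: gT]).
have comm_S : {in enum S &, forall x y, commute x y}.
  move=> x y; rewrite !mem_enum => /(subsetP SG) xG /(subsetP SG) yG.
  exact: (centsP abG).
have powE := regmx_conv_pow cardT 'F_p p SG.
rewrite regmx_grind -big_enum regmx_frobenius // big_enum /= in powE.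
rewrite -(regmx_entry1 cardT) powE summxE.
under eq_bigr => x _ do rewrite regmx_entry1 /grind in_set1.
have [/imsetP[y yS ->]|zS] := boolP (z \in expset p S); last first.
  by rewrite big1 // => x xS; case: eqP => // zx; case/imsetP: zS; exists x.
have powK := expgK coGp.
rewrite (bigD1 y) //= eqxx big1 ?addr0 // => x /andP[xS neq_xy].
case: eqP => // eq_pow; case/eqP: neq_xy.
by rewrite -(powK x) ?(subsetP SG) // -eq_pow powK ?(subsetP SG).
Qed.

Section PowersOfBlockUnions.

Variables (gT : finGroupType) (G : {group gT}) (P : {set {set gT}}).
Hypotheses (unitP : unital_partition G P) (abG : abelian G).

Lemma expset_subG k (S : {set gT}) : S \subset G -> expset k S \subset G.
Proof.
by move=> SG; apply/subsetP => _ /imsetP[x /(subsetP SG) xG ->]; apply: groupX.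
Qed.

Lemma block_union_expset_prime p (S : {set gT}) : prime p -> coprime #|G| p ->
  S \subset G -> block_union P S -> block_union P (expset p S).
Proof.
case: unitP => partP unit1 mul_closed p_pr coGp SG unionS.
have span_pow k : in_zspan P (conv_pow G S k).
  elim: k => [|k IHk] /=; last exact: mul_closed (block_union_zspan partP SG unionS) IHk.
  apply: (block_union_zspan partP); first by rewrite sub1set group1.
  exact: (block_union_block partP unit1).
move=> A AP u v uA vA uS.
have := congr1 (fun a : int => a%:~R : 'F_p) (zspan_const partP (span_pow p) AP uA vA).
have powmod w := conv_pow_prime_modp w p_pr abG coGp SG.
rewrite /= !powmod uS.
by case: (v \in expset p S) => // /eqP; rewrite mulr1n mulr0n oner_eq0.
Qed.

Lemma block_union_expset k (S : {set gT}) : (0 < k)%N -> coprime #|G| k ->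
  S \subset G -> block_union P S -> block_union P (expset k S).
Proof.
elim/ltn_ind: k S => k IHk S k_gt0 coGk SG unionS.
have [k_le1|k_gt1] := leqP k 1.
  have -> : k = 1%N by apply/eqP; rewrite eqn_leq k_le1.
  by rewrite /expset (eq_imset _ (@expg1 _)) imset_id.
have q_pr := pdiv_prime k_gt1; set q := pdiv k in q_pr.
have q_dvd_k : (q %| k)%N := pdiv_dvd k.
have kE : k = (k %/ q * q)%N by rewrite divnK.
have k'_gt0 : (0 < k %/ q)%N by rewrite divn_gt0 ?prime_gt0 // dvdn_leq.
have -> : expset k S = expset q (expset (k %/ q) S).
  by rewrite /expset -imset_comp {1}kE; apply: eq_imset => x /=; apply: expgM.
apply: block_union_expset_prime; rewrite ?expset_subG //.
- exact: coprime_dvdr coGk.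
apply: IHk => //; first by rewrite ltn_Pdiv ?prime_gt1.
by apply: coprime_dvdr coGk; rewrite {2}kE dvdn_mulr.
Qed.

End PowersOfBlockUnions.

Lemma Pd_subset (gT : finGroupType) (G : {group gT}) (P : {set {set gT}}) d d' A :
  cyclic G -> unital_partition G P -> A \in Pd P d -> A \in Pd P d' ->
  Pd P d \subset Pd P d'.
Proof.
move=> cycG unitP; have [partP _ _] := unitP.
case/setIdP=> AP /exists_inP[x xA /eqP ox] /setIdP[_ /exists_inP[y yA /eqP oy]].
apply/subsetP => B /setIdP[BP /exists_inP[z zB /eqP oz]].
have inG u C : C \in P -> u \in C -> u \in G.
  by move=> CP; apply/subsetP/(block_subset partP CP).
have [xG zG] := (inG x A AP xA, inG z B BP zB).
have cyc_xz : <[x]>%g = <[z]>%g.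
  apply/eqP; rewrite (eq_subG_cyclic cycG) ?cycle_subG //.
  by rewrite -/(order x) -/(order z) ox oz.
have /cycleP[i xE] : x \in <[z]>%g by rewrite -cyc_xz cycle_id.
have co_id : coprime i d.
  by rewrite coprime_sym -oz -generator_coprime -xE /generator cyc_xz.
have d_dvd_G : (d %| #|G|)%N by rewrite -oz order_dvdG.
have [k [k_gt0 co_kG ki]] := coprime_lift (cardG_gt0 G) d_dvd_G co_id.
have xBk : x \in expset k B.
  by apply/imsetP; exists z; rewrite // xE; apply/eqP; rewrite eq_expg_mod_order oz ki.
have unionBk : block_union P (expset k B).
  apply: (block_union_expset unitP (cyclic_abelian cycG) k_gt0).
  - by rewrite coprime_sym.
  - exact: (block_subset partP BP).
  - exact: (block_union_block partP BP).
have /imsetP[w wB yE] := unionBk A AP x y xA yA xBk.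
have co_wk : coprime #[w]%g k.
  by rewrite coprime_sym (coprime_dvdr (order_dvdG (inG w B BP wB))).
rewrite inE BP; apply/exists_inP; exists w => //.
by rewrite -oy yE orderXgcd (eqP co_wk) divn1.
Qed.

Lemma Pd_neq0 (gT : finGroupType) (G : {group gT}) (P : {set {set gT}}) d :
  cyclic G -> partition P G -> (d %| #|G|)%N -> Pd P d != set0.
Proof.
case/cyclicP=> g Gg partP d_dvd_G.
have og : #[g]%g = #|G| by rewrite Gg.
have d_gt0 : (0 < d)%N := dvdn_gt0 (cardG_gt0 G) d_dvd_G.
set x := (g ^+ (#|G| %/ d))%g.
have ox : #[x]%g = d.
  rewrite orderXdiv og ?dvdn_div // -{1}(divnK d_dvd_G) mulKn //.
  by rewrite divn_gt0 // dvdn_leq.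
have xP : x \in cover P by rewrite (cover_partition partP) Gg mem_cycle.
apply/set0Pn; exists (pblock P x); rewrite inE pblock_mem //.
by apply/exists_inP; exists x; rewrite ?mem_pblock ?ox.
Qed.

Theorem corollary3p4 (gT : finGroupType) (G : {group gT}) (m : nat)
  (P : {set {set gT}}) (d d' : nat) :
  cyclic G -> #|G| = m -> unital_partition G P ->
  (d %| m)%N -> (d' %| m)%N ->
  (Pd P d :&: Pd P d' != set0 <-> Pd P d = Pd P d').
Proof.
move=> cycG <- unitP _ d'_dvd_G; split=> [|PdE].
  case/set0Pn=> A /setIP[APd APd'].
  by apply/eqP; rewrite eqEsubset (Pd_subset cycG unitP APd APd')
                                  (Pd_subset cycG unitP APd' APd).
have [partP _ _] := unitP.
by rewrite PdE setIid (Pd_neq0 cycG partP d'_dvd_G).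
Qed.
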